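(* Let $P$ be a program in normal form over a propositional signature $\Sigma$, and $q\in\Sigma$. If $P$ is $q$-forgettable, then $\langle P,\{q\}\rangle$ does not satisfy criterion $\Omega$.
   Context: A program over $\Sigma$ is a finite set of rules $r$ of the form $a_1\vee\dots\vee a_k\leftarrow b_1,\dots,b_l,\ not\,c_1,\dots,not\,c_m,\ not\,not\,d_1,\dots,not\,not\,d_n$ with atoms in $\Sigma$; write $H(r)=\{a_i\}$, $B^+(r)=\{b_i\}$, $B^-(r)=\{c_i\}$, $B^{--}(r)=\{d_i\}$, $B(r)=B^+(r)\cup\{not\,c: c\in B^-(r)\}\cup\{not\,not\,d:d\in B^{--}(r)\}$. $\Sigma(r)$, $\Sigma(P)$ are the atoms occurring in $r$, $P$. Reduct: $P^I=\{H(r)\leftarrow B^+(r): r\in P, B^-(r)\cap I=\emptyset, B^{--}(r)\subseteq I\}$. $I$ classically satisfies $r$ if $B^+(r)\subseteq I$, $B^-(r)\cap I=\emptyset$, $B^{--}(r)\subseteq I$ imply $H(r)\cap I\ne\emptyset$. An HT-interpretation $\langle X,Y\rangle$ ($X\subseteq Y$) is an HT-model of $P$ if $Y$ classically satisfies all rules of $P$ and $X$ all rules of $P^Y$; $\mathcal{HT}(P)$ is the set of HT-models with $X,Y\subseteq\Sigma(P)$. Normal form: $P$ is in normal form if (i) for every atom $a$ and $r\in P$ at most one of $a$, $not\,a$, $not\,not\,a$ is in $B(r)$; (ii) if $a\in H(r)$ then neither $a$ nor $not\,a$ is in $B(r)$; (iii) there are no $r,r'\in P$ with ($H(r')\subseteq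 H(r)$ and $B(r')\subsetneq B(r)$) or ($H(r')\subsetneq H(r)$ and $B(r')\subseteq B(r)$). A self-cycle on $q$ is a rule $r$ with $q\in H(r)$ and $q\in B^{--}(r)$. A program $P$ in normal form is $q$-forgettable if at least one holds: (a) every rule of $P$ in which $q$ occurs is a self-cycle on $q$; (b) $P$ contains the fact $q\leftarrow$ (the rule with head $\{q\}$ and empty body); (c) $P$ contains no self-cycle on $q$. Criterion $\Omega$: for a program $P$, $V\subseteq\Sigma$, $Y\subseteq\Sigma\setminus V$, $A\subseteq V$, let $R^{Y,A}=\{X\setminus V:\langle X,Y\cup A\rangle\in\mathcal{HT}(P)\}$, $Rel^Y=\{A\subseteq V:\langle Y\cup A,Y\cup A\rangle\in\mathcal{HT}(P)$ and no $A'\subsetneq A$ has $\langle Y\cup A',Y\cup A\rangle\in\mathcal{HT}(P)\}$, $\mathcal{R}^Y=\{R^{Y,A}:A\in Rel^Y\}$. $\langle P,V\rangle$ satisfies $\Omega$ if there is $Y\subseteq\Sigma\setminus V$ such that $\mathcal{R}^Y$ is non-empty and has no least element with respect to $\subseteq$. *)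

From mathcomp Require Import all_boot.
Set Implicit Arguments. Unset Strict Implicit. Unset Printing Implicit Defensive.

Section Programs.
Variable Sigma : finType.

(* A rule  H <- B+, not B-, not not B--  is the quadruple (H, B+, B-, B--). *)
Definition rule := ({set Sigma} * {set Sigma} * {set Sigma} * {set Sigma})%type.
Definition program := {set rule}.

Definition H   (r : rule) : {set Sigma} := r.1.1.1.
Definition Bp  (r : rule) : {set Sigma} := r.1.1.2.
Definition Bn  (r : rule) : {set Sigma} := r.1.2.
Definition Bnn (r : rule) : {set Sigma} := r.2.

(* Body literals: inl (inl a) = a,  inl (inr a) = not a,  inr a = not not a. *)
Definition literal := (Sigma + Sigma + Sigma)%type.
Definition B (r : rule) : {set literal} :=
  [set (inl (inl a) : literal) | a in Bp r]
  :|: [set (inl (inr a) : literal) | a in Bn r]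
  :|: [set (inr a : literal) | a in Bnn r].

Definition atoms_rule (r : rule) : {set Sigma} := H r :|: Bp r :|: Bn r :|: Bnn r.
Definition atoms (P : program) : {set Sigma} := \bigcup_(r in P) atoms_rule r.

Definition reduct (P : program) (I : {set Sigma}) : program :=
  [set ((H r, Bp r, set0, set0) : rule) | r in P & [disjoint Bn r & I] && (Bnn r \subset I)].

Definition csat (I : {set Sigma}) (r : rule) : bool :=
  [&& Bp r \subset I, [disjoint Bn r & I] & Bnn r \subset I] ==> ~~ [disjoint H r & I].

Definition HTmodel (P : program) (X Y : {set Sigma}) : bool :=
  [&& X \subset Y, X \subset atoms P, Y \subset atoms P,
      [forall r in P, csat Y r] & [forall r in reduct P Y, csat X r]].

Definition normal_form (P : program) : bool :=
  [forall r in P,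
     [&& [disjoint Bp r & Bn r], [disjoint Bp r & Bnn r], [disjoint Bn r & Bnn r],
         [disjoint H r & Bp r] & [disjoint H r & Bn r]]]
  && [forall r in P, forall r' in P,
        ~~ (((H r' \subset H r) && (B r' \proper B r))
            || ((H r' \proper H r) && (B r' \subset B r)))].

Definition self_cycle (q : Sigma) (r : rule) : bool := (q \in H r) && (q \in Bnn r).

Definition forgettable (P : program) (q : Sigma) : bool :=
  [forall r in P, (q \in atoms_rule r) ==> self_cycle q r]
  || (((([set q], set0, set0, set0) : rule)) \in P)
  || [forall r in P, ~~ self_cycle q r].

Definition Rset (P : program) (V Y A : {set Sigma}) : {set {set Sigma}} :=
  [set X :\: V | X in [set X | HTmodel P X (Y :|: A)]].

Definition Rel (P : program) (V Y : {set Sigma}) : {set {set Sigma}} :=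
  [set A : {set Sigma} | (A \subset V) && HTmodel P (Y :|: A) (Y :|: A)
           && [forall A' : {set Sigma}, (A' \proper A) ==> ~~ HTmodel P (Y :|: A') (Y :|: A)]].

Definition Rfam (P : program) (V Y : {set Sigma}) : {set {set {set Sigma}}} :=
  [set Rset P V Y A | A in Rel P V Y].

Definition Omega (P : program) (V : {set Sigma}) : Prop :=
  exists Y : {set Sigma}, (Y \subset ~: V) /\ Rfam P V Y != set0 /\
    ~ (exists2 R0, R0 \in Rfam P V Y & forall R, R \in Rfam P V Y -> R0 \subset R).

End Programs.

From mathcomp Require Import all_boot.
Set Implicit Arguments. Unset Strict Implicit. Unset Printing Implicit Defensive.

(* Since V = {q} and Y avoids q, Rel^Y is a subset of {∅, {q}}, so the family
   R^Y has a least element unless Rel^Y = {∅, {q}}; in that case: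
   (a) if q occurs only in self-cycles, adding q to both components of an
       HT-model gives an HT-model, whence R^{Y,∅} ⊆ R^{Y,{q}};
   (b) the fact q <- puts q into every model, so ∅ ∉ Rel^Y;
   (c) without self-cycles on q, <Y, Y ∪ {q}> is an HT-model, which
       contradicts the minimality of {q} in Rel^Y. *)

Lemma disjoint_setU1r (T : finType) (A B : {set T}) x :
  x \notin A -> [disjoint A & B :|: [set x]] = [disjoint A & B].
Proof.
move=> xA; rewrite !disjoints_subset setCU subsetI.
by rewrite -[A \subset ~: [set x]]disjoints_subset disjoint_sym disjoints1 xA andbT.
Qed.

Lemma subset_setU1r (T : finType) (A B : {set T}) x :
  x \notin A -> (A \subset B :|: [set x]) = (A \subset B).
Proof.
by move=> xA; rewrite setUC -subDset (setDidPl _) // disjoint_sym disjoints1.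
Qed.

Lemma not_disjoint_setU1r (T : finType) (A B : {set T}) x :
  x \in A -> ~~ [disjoint A & B :|: [set x]].
Proof. by move=> xA; apply/negP => /disjointFr/(_ xA); rewrite !inE eqxx orbT. Qed.

Section Programs.
Variable Sigma : finType.
Implicit Types (P : program Sigma) (r : rule Sigma) (q : Sigma) (I X Y : {set Sigma}).

Lemma notin_atoms_rule q r : q \notin atoms_rule r ->
  [/\ q \notin H r, q \notin Bp r, q \notin Bn r & q \notin Bnn r].
Proof. by rewrite /atoms_rule !inE !negb_or => /andP[/andP[/andP[]]]. Qed.

Lemma csat_setU1 q I r : q \notin atoms_rule r -> csat (I :|: [set q]) r = csat I r.
Proof.
case/notin_atoms_rule => qH qBp qBn qBnn.
by rewrite /csat !disjoint_setU1r // !subset_setU1r.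
Qed.

Lemma csat_positive I r :
  csat I (H r, Bp r, set0, set0) = (Bp r \subset I) ==> ~~ [disjoint H r & I].
Proof.
rewrite /csat -[Bp (_, _, _, _)]/(Bp r) -[Bn _]/set0 -[Bnn _]/set0 -[H (_, _, _, _)]/(H r).
by rewrite (sub0set I) disjoints_subset (sub0set (~: I)) !andbT.
Qed.

Lemma reduct_csatP P X Y :
  reflect (forall r, r \in P -> [disjoint Bn r & Y] -> Bnn r \subset Y ->
             Bp r \subset X -> ~~ [disjoint H r & X])
          [forall r in reduct P Y, csat X r].
Proof.
apply: (iffP forall_inP) => [sat r rP dY sY sX | sat _ /imsetP[r + ->]].
  have /sat : ((H r, Bp r, set0, set0) : rule Sigma) \in reduct P Y.
    by apply/imsetP; exists r; rewrite // inE rP dY.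
  by rewrite csat_positive sX.
by rewrite inE csat_positive => /and3P[rP dY sY]; apply/implyP; apply: sat.
Qed.

Lemma HTmodel_fact q P X Y :
  (([set q], set0, set0, set0) : rule Sigma) \in P -> HTmodel P X Y -> q \in Y.
Proof.
move=> fact /and5P[_ _ _ /forall_inP/(_ _ fact) Ysat _].
pose f : rule Sigma := ([set q], set0, set0, set0).
have : csat Y (H f, Bp f, set0, set0) := Ysat.
by rewrite csat_positive -[Bp f]/set0 -[H f]/[set q] (sub0set Y) disjoints1 negbK.
Qed.

Section Forgetting.
Variables (P : program Sigma) (q : Sigma).

Lemma HTmodel_add_self_cycles X Y :
  [forall r in P, (q \in atoms_rule r) ==> self_cycle q r] -> q \in atoms P ->
  HTmodel P X Y -> HTmodel P (X :|: [set q]) (Y :|: [set q]).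
Proof.
move=> /forall_inP cycles qP /and5P[XY XP YP /forall_inP Ysat /reduct_csatP Xsat].
have qH r : r \in P -> q \in atoms_rule r -> q \in H r.
  by move=> rP /(implyP (cycles r rP)) /andP[].
apply/and5P; split.
- exact: setSU XY.
- by rewrite subUset XP sub1set.
- by rewrite subUset YP sub1set.
- apply/forall_inP => r rP; case: (boolP (q \in atoms_rule r)) => qr.
    by apply/implyP => _; apply/not_disjoint_setU1r/qH.
  by rewrite csat_setU1 // Ysat.
apply/reduct_csatP => r rP dY sY sX; case: (boolP (q \in atoms_rule r)) => qr.
  exact/not_disjoint_setU1r/qH.
have [qH' qBp qBn qBnn] := notin_atoms_rule qr.
rewrite disjoint_setU1r // in dY; rewrite subset_setU1r // in sX.
rewrite subset_setU1r // in sY; rewrite disjoint_setU1r //; exact: Xsat.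
Qed.

Lemma HTmodel_drop_no_self_cycle Y :
  [forall r in P, ~~ self_cycle q r] -> HTmodel P Y Y ->
  HTmodel P (Y :|: [set q]) (Y :|: [set q]) -> HTmodel P Y (Y :|: [set q]).
Proof.
move=> /forall_inP acyclic /and5P[_ YP _ /forall_inP Ysat _].
move=> /and5P[_ _ YqP /forall_inP Yqsat _].
have YYq : Y \subset Y :|: [set q] := subsetUl Y [set q].
apply/and5P; split; [exact: YYq | exact: YP | exact: YqP | exact/forall_inP |].
apply/reduct_csatP => r rP dYq sYq sY; apply/negP => dHY.
have qBnn : q \in Bnn r.
  apply: contraT => qBnn; move: (Ysat r rP).
  by rewrite /csat sY (disjointWr YYq dYq) -(subset_setU1r _ qBnn) sYq dHY.
have qH : q \in H r.
  apply: contraT => qH; move: (Yqsat r rP).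
  by rewrite /csat (subset_trans sY YYq) dYq sYq disjoint_setU1r // dHY.
by move: (acyclic r rP); rewrite /self_cycle qH qBnn.
Qed.

Lemma Rel_set1 Y A : A \in Rel P [set q] Y -> A = set0 \/ A = [set q].
Proof. by rewrite inE subset1 => /andP[/andP[/orP[]/eqP-> _] _]; [right | left]. Qed.

Lemma Rset0_subset_Rset1 Y :
  forgettable P q -> q \notin Y ->
  set0 \in Rel P [set q] Y -> [set q] \in Rel P [set q] Y ->
  Rset P [set q] Y set0 \subset Rset P [set q] Y [set q].
Proof.
move=> forg qY; rewrite !inE setU0 => /andP[/andP[_ Y_model] _].
move=> /andP[/andP[_ Yq_model] /forall_inP minimal].
case/orP: forg => [/orP[cycles | fact] | acyclic].
- have qP : q \in atoms P.
    by case/and5P: Yq_model => _ _ /subsetP-> //; rewrite !inE eqxx orbT.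
  apply/subsetP => R /imsetP[X]; rewrite inE setU0 => XY ->.
  apply/imsetP; exists (X :|: [set q]); first by rewrite inE HTmodel_add_self_cycles.
  by rewrite setDUl setDv setU0.
- by rewrite (HTmodel_fact fact Y_model) in qY.
have /minimal : set0 \proper [set q] by rewrite proper0; apply/set0Pn; exists q; rewrite inE.
by rewrite setU0 HTmodel_drop_no_self_cycle.
Qed.

Lemma Rfam_least Y :
  forgettable P q -> q \notin Y -> Rfam P [set q] Y != set0 ->
  exists2 R0, R0 \in Rfam P [set q] Y & forall R, R \in Rfam P [set q] Y -> R0 \subset R.
Proof.
move=> forg qY /set0Pn[_ /imsetP[A1 relA1 _]].
suff [A0 relA0 least] : exists2 A0, A0 \in Rel P [set q] Y &
    forall A, A \in Rel P [set q] Y -> Rset P [set q] Y A0 \subset Rset P [set q] Y A.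
  by exists (Rset P [set q] Y A0) => [|_ /imsetP[A relA ->]]; [apply: imset_f | apply: least].
case: (boolP (set0 \in Rel P [set q] Y)) => [rel0 | nrel0].
  exists set0 => // A relA; case: (Rel_set1 relA) => eA; rewrite eA in relA *.
    exact: subxx.
  exact: Rset0_subset_Rset1.
have Rel_q A : A \in Rel P [set q] Y -> A = [set q].
  by move=> relA; case: (Rel_set1 relA) => // eA; rewrite -eA relA in nrel0.
by exists A1 => // A /Rel_q ->; rewrite (Rel_q _ relA1).
Qed.

End Forgetting.
End Programs.

Theorem theorem4 (Sigma : finType) (P : program Sigma) (q : Sigma) :
  normal_form P -> forgettable P q -> ~ Omega P [set q].
Proof.
move=> _ forg [Y [YV [nonempty no_least]]]; apply: no_least.
apply: Rfam_least => //.
by move: YV; rewrite subsetC sub1set inE.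
Qed.
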